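(* Let $G$ be a finite group. If $G=H\,Z(G)$ for some subgroup $H$ of $G$, then $\mathcal{CD}(G)$ and $\mathcal{CD}(H)$ are isomorphic as lattices, and $\mathcal{CD}(G)=\{X Z(G)\mid X\in\mathcal{CD}(H)\}$.
   Context: For a finite group $G$ and $H\le G$, $m_G(H)=|H|\,|C_G(H)|$, $m^*(G)=\max\{m_G(H)\mid H\le G\}$, and the Chermak-Delgado lattice is $\mathcal{CD}(G)=\{H\le G\mid m_G(H)=m^*(G)\}$, a sublattice of the subgroup lattice of $G$. *)

From mathcomp Require Import all_boot all_fingroup all_solvable.
Set Implicit Arguments. Unset Strict Implicit. Unset Printing Implicit Defensive.
Local Open Scope group_scope.

Section CD.
Variable gT : finGroupType.

Definition mCD (G H : {set gT}) : nat := (#|H| * #|'C_G(H)|)%N.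

Definition mstarCD (G : {group gT}) : nat :=
  \max_(H : {group gT} | H \subset G) mCD G H.

Definition CDlat (G : {group gT}) : {set {group gT}} :=
  [set H : {group gT} | (H \subset G) && (mCD G H == mstarCD G)].
End CD.

(* Let Z be central in G with G = HZ (the theorem takes Z = Z(G)). For X <= H
   we get C_G(X) = C_H(X) Z, and X |-> XZ, K |-> K :&: H are mutually inverse
   bijections between the subgroups of H containing H :&: Z and the subgroups
   of G containing Z; along them m_G(XZ) |H :&: Z|^2 = m_H(X) |Z|^2, so the
   maximal values correspond too. A Chermak-Delgado subgroup contains every
   central subgroup (adjoining one would increase m), so CD(H) and CD(G) lie
   in these two intervals and the correspondence, which respects meets and
   joins, maps one onto the other. *)

From mathcomp Require Import all_boot all_fingroup all_solvable.
Set Implicit Arguments. Unset Strict Implicit.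
Local Open Scope group_scope.

Section CDlatBasics.
Variable gT : finGroupType.
Implicit Types L K Y : {group gT}.

Lemma CDlatP L K :
  reflect (K \subset L /\ mCD L K = mstarCD L) (K \in CDlat L).
Proof. by rewrite inE; apply: (iffP andP) => -[-> /eqP]. Qed.

Lemma leq_mstarCD L K : K \subset L -> (mCD L K <= mstarCD L)%N.
Proof.
exact: (@leq_bigmax_cond _ (fun K : {group gT} => K \subset L) (mCD L)).
Qed.

Lemma exists_CDlat L : exists K, K \in CDlat L.
Proof.
have sLL : L \subset L by [].
have := erefl (mstarCD L); rewrite {2}/mstarCD (bigmax_eq_arg _ sLL).
by case: arg_maxnP => // K sKL _ mK; exists K; apply/CDlatP.
Qed.

(* Adjoining a central Y to K keeps C_L(K) and enlarges K, so m_L would grow. *)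
Lemma central_sub_CDlat L K Y : K \in CDlat L -> Y \subset 'Z(L) -> Y \subset K.
Proof.
case/CDlatP=> sKL mK /subsetIP[sYL]; rewrite centsC => cLY.
apply: contraT => nsYK.
have sKYL : K <*> Y \subset L by rewrite join_subG sKL.
have ltKKY : (#|K| < #|K <*> Y|)%N.
  rewrite proper_card // properE joing_subl join_subG subxx.
  by rewrite negb_and nsYK orbT.
have := leq_mstarCD sKYL; rewrite -mK /mCD centY setICA (setIidPl cLY) setIC.
by rewrite leqNgt ltn_pmul2r ?cardG_gt0 ?ltKKY.
Qed.

Lemma joing_distr (A B C : {set gT}) :
  (A <*> B) <*> C = (A <*> C) <*> (B <*> C).
Proof.
rewrite [RHS]joingA -(joingA A C B) (joingC C B) joingA -(joingA (A <*> B)).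
by rewrite [C <*> C]joingE setUid joing_idr.
Qed.

End CDlatBasics.

Section CentralProduct.
Variables (gT : finGroupType) (G H Z : {group gT}).
Hypotheses (defG : G :=: H * Z) (sZZG : Z \subset 'Z(G)).
Implicit Types X Y K : {group gT}.

Let sHG : H \subset G. Proof. by rewrite defG mulG_subl. Qed.
Let cGZ : G \subset 'C(Z).
Proof. by rewrite centsC (subset_trans sZZG) ?subsetIr. Qed.
Let cZX X : X \subset H -> Z \subset 'C(X).
Proof.
by move=> sXH; rewrite centsC (subset_trans sXH) // (subset_trans sHG).
Qed.

Lemma joinZE X : X \subset H -> X <*> Z = X * Z.
Proof. by move/cZX/cent_joinEr. Qed.

Lemma joinZ_subG X : X \subset H -> X <*> Z \subset G.
Proof. by move=> sXH; rewrite joinZE // defG mulSg. Qed.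

Lemma card_joinZ X : X \subset H -> H :&: Z \subset X ->
  (#|X <*> Z| * #|H :&: Z| = #|X| * #|Z|)%N.
Proof.
move=> sXH sWX; rewrite joinZE // [RHS]mul_cardG; congr (_ * #|_|)%N.
by rewrite -(setIidPr sWX) setIA (setIidPl sXH).
Qed.

Lemma centG_mulZ X : X \subset H -> 'C_G(X) = 'C_H(X) * Z.
Proof. by move=> sXH; rewrite setIC [H :&: _]setIC group_modr -?defG ?cZX. Qed.

Lemma card_centG X : X \subset H ->
  (#|'C_G(X)| * #|H :&: Z| = #|'C_H(X)| * #|Z|)%N.
Proof.
move=> sXH; rewrite centG_mulZ // [RHS]mul_cardG; congr (_ * #|_|)%N.
by rewrite -setIA (setIidPr (cZX sXH)).
Qed.

Lemma mCD_joinZ X : X \subset H -> H :&: Z \subset X ->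
  (mCD G (X <*> Z) * #|H :&: Z| ^ 2 = mCD H X * #|Z| ^ 2)%N.
Proof.
move=> sXH sWX; have cCGZ : 'C_G(X) \subset 'C(Z) by rewrite subIset ?cGZ.
rewrite /mCD centY setIA (setIidPl cCGZ) -!mulnn mulnACA.
by rewrite card_joinZ // card_centG // mulnACA.
Qed.

Lemma joinZ_setIH X : X \subset H -> H :&: Z \subset X -> (X <*> Z) :&: H = X.
Proof. by move=> sXH sWX; rewrite joinZE // -group_modl // setIC mulGSid. Qed.

Lemma setIH_joinZ K : K \subset G -> Z \subset K -> (K :&: H) <*> Z = K.
Proof.
move=> sKG sZK; rewrite joinZE ?subsetIr // group_modr // -defG.
exact/setIidPl.
Qed.

Lemma CDlat_supZ K : K \in CDlat G -> Z \subset K.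
Proof. by move/central_sub_CDlat; apply. Qed.

Lemma CDlat_supHZ X : X \in CDlat H -> H :&: Z \subset X.
Proof. by move/central_sub_CDlat; apply; rewrite setIS ?cZX. Qed.

Lemma mstarCD_joinZ : (mstarCD G * #|H :&: Z| ^ 2 = mstarCD H * #|Z| ^ 2)%N.
Proof.
apply/eqP; rewrite eqn_leq; apply/andP; split.
  have [K /[dup] /CDlatP[sKG <-] /CDlat_supZ sZK] := exists_CDlat G.
  have sWKH : H :&: Z \subset K :&: H by rewrite [K :&: H]setIC setIS.
  rewrite -{1}(setIH_joinZ sKG sZK) mCD_joinZ ?subsetIr //.
  by rewrite leq_mul2r leq_mstarCD ?subsetIr ?orbT.
have [X /[dup] /CDlatP[sXH <-] /CDlat_supHZ sWX] := exists_CDlat H.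
by rewrite -mCD_joinZ // leq_mul2r leq_mstarCD ?joinZ_subG ?orbT.
Qed.

Lemma CDlat_joinZ X : X \in CDlat H -> (X <*> Z)%G \in CDlat G.
Proof.
move=> /[dup] /CDlatP[sXH mX] /CDlat_supHZ sWX; apply/CDlatP.
split; first exact: joinZ_subG; apply/eqP.
rewrite -(eqn_pmul2r (_ : 0 < #|H :&: Z| ^ 2)%N) ?expn_gt0 ?cardG_gt0 //.
by rewrite mCD_joinZ // mstarCD_joinZ mX.
Qed.

Lemma CDlat_setIH K : K \in CDlat G -> (K :&: H)%G \in CDlat H.
Proof.
move=> /[dup] /CDlatP[sKG mK] /CDlat_supZ sZK; apply/CDlatP.
split; first exact: subsetIr; apply/eqP.
rewrite -(eqn_pmul2r (_ : 0 < #|Z| ^ 2)%N) ?expn_gt0 ?cardG_gt0 //.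
have sWKH : H :&: Z \subset K :&: H by rewrite [K :&: H]setIC setIS.
by rewrite -mCD_joinZ ?subsetIr // setIH_joinZ // mK mstarCD_joinZ.
Qed.

Lemma CDlat_mulZ K :
  K \in CDlat G <-> exists2 X : {group gT}, X \in CDlat H & K :=: X * Z.
Proof.
split=> [KCD | [X /[dup] XCD /CDlatP[sXH _] defK]].
  exists (K :&: H)%G; first exact: CDlat_setIH.
  by rewrite -joinZE ?subsetIr // setIH_joinZ ?CDlat_supZ //; case/CDlatP: KCD.
have -> : K = (X <*> Z)%G by apply: val_inj; rewrite /= defK joinZE.
exact: CDlat_joinZ.
Qed.

Lemma joinZ_setI X Y : X \in CDlat H -> Y \in CDlat H ->
  (X :&: Y) <*> Z = (X <*> Z) :&: (Y <*> Z).
Proof.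
move=> /[dup] /CDlatP[sXH _] /CDlat_supHZ sWX.
move=> /[dup] /CDlatP[sYH _] /CDlat_supHZ sWY.
set K := ((X <*> Z) :&: (Y <*> Z))%G.
have sKG : K \subset G by rewrite subIset ?joinZ_subG.
have sZK : Z \subset K by rewrite subsetI !joing_subr.
by rewrite -(setIH_joinZ sKG sZK) setIIl !joinZ_setIH.
Qed.

Lemma joinZ_inj : {in CDlat H &, injective (fun X => (X <*> Z)%G)}.
Proof.
move=> X Y /[dup] XCD /CDlatP[sXH _] /[dup] YCD /CDlatP[sYH _].
move=> /(congr1 val) /= eqXYZ; apply: val_inj => /=.
by rewrite -(joinZ_setIH sXH (CDlat_supHZ XCD)) eqXYZ joinZ_setIH ?CDlat_supHZ.
Qed.

Lemma imset_joinZ_CDlat : (fun X => (X <*> Z)%G) @: CDlat H = CDlat G.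
Proof.
apply/setP=> K; apply/imsetP/idP=> [[X XCD ->] | KCD]; first exact: CDlat_joinZ.
exists (K :&: H)%G; first exact: CDlat_setIH.
by apply: val_inj; rewrite /= setIH_joinZ ?CDlat_supZ //; case/CDlatP: KCD.
Qed.

End CentralProduct.

Theorem proposition3p5 (gT : finGroupType) (G H : {group gT}) :
  G :=: H * 'Z(G) ->
  (* CD(G) and CD(H) are isomorphic as lattices (meet = intersection,
     join = generated subgroup, as sublattices of the subgroup lattice) *)
  (exists f : {group gT} -> {group gT},
      [/\ {in CDlat H &, injective f},
          f @: CDlat H = CDlat G,
          (forall X Y : {group gT}, X \in CDlat H -> Y \in CDlat H ->
             f (X :&: Y)%G :=: f X :&: f Y) &
          (forall X Y : {group gT}, X \in CDlat H -> Y \in CDlat H ->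
             f (X <*> Y)%G :=: f X <*> f Y)])
  /\
  (* CD(G) = { X Z(G) | X in CD(H) } *)
  (forall K : {group gT},
      K \in CDlat G <-> exists2 X : {group gT}, X \in CDlat H & K :=: X * 'Z(G)).
Proof.
move=> defG; have sZZ := subxx 'Z(G).
split; last exact: CDlat_mulZ.
exists (fun X => (X <*> 'Z(G)%G)%G); split.
- exact: (joinZ_inj defG sZZ).
- exact: (imset_joinZ_CDlat defG sZZ).
- by move=> X Y; apply: (joinZ_setI defG sZZ).
- by move=> X Y _ _; apply: joing_distr.
Qed.
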